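(* Let $O=(o_{i,j})_{i,j=1}^k$ be a real $k\times k$ matrix, let $\alpha_{i,j}=o_{i,j}-o_{k,j}$ for $i=1,\ldots,k-1$, $j=1,\ldots,k$, and let $A$ be the $k\times k$ matrix whose first $k-1$ rows are $(\alpha_{i,1},\ldots,\alpha_{i,k})$, $i=1,\ldots,k-1$, and whose last row is $(1,\ldots,1)$. Suppose $A$ is invertible and let $\Lambda=(\Lambda_{i,j})=A^{-1}$. Assume (i) $o_{ii}>o_{ji}\ge 0$ for all $i\ne j$; (ii) $\Lambda_{i,k}>0$ for all $i=1,\ldots,k$; (iii) $\sum_{j=1}^k o_{i,j}\Lambda_{j,k}>1$ for all $i=1,\ldots,k-1$. Then $\mathbf{f}^D=(f^D_1,\ldots,f^D_k)$ with $f^D_j=\Lambda_{j,k}$ is a Dutch book solution, and for every $\mathbf{p}$ in the simplex and every $i$, $$G(\mathbf{f}^D)=\prod_{l=1}^k\Big(\sum_{j=1}^k o_{l,j}f^D_j\Big)^{p_l}=\sum_{j=1}^k o_{i,j}\Lambda_{j,k}.$$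
   Context: $\Delta_{k-1}=\{\mathbf{x}\in[0,1]^k: x_1+\cdots+x_k=1\}$. For $\mathbf{f}\in\Delta_{k-1}$, $\overline{o}_i(\mathbf{f})=\sum_{j=1}^k o_{i,j}f_j$, and for $\mathbf{p}\in\Delta_{k-1}$, $G(\mathbf{f})=\prod_{i=1}^k\overline{o}_i(\mathbf{f})^{p_i}$. A Dutch book solution is an $\mathbf{f}\in\Delta_{k-1}$ with $\overline{o}_1(\mathbf{f})=\overline{o}_2(\mathbf{f})=\cdots=\overline{o}_k(\mathbf{f})>1$. *)

From HB Require Import structures.
From mathcomp Require Import all_boot all_order all_algebra.
From mathcomp Require Import reals exp.
Set Implicit Arguments. Unset Strict Implicit. Unset Printing Implicit Defensive.
Import Order.TTheory GRing.Theory Num.Theory.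
Local Open Scope ring_scope.

Section Defs.
Variable R : realType.

Definition in_simplex (k : nat) (x : 'I_k -> R) : Prop :=
  (forall i, 0 <= x i <= 1) /\ \sum_(i < k) x i = 1.

Definition obar (k : nat) (O : 'M[R]_k) (f : 'I_k -> R) (i : 'I_k) : R :=
  \sum_(j < k) O i j * f j.

Definition Gfun (k : nat) (O : 'M[R]_k) (p f : 'I_k -> R) : R :=
  \prod_(i < k) powR (obar O f i) (p i).

Definition dutch_book (k : nat) (O : 'M[R]_k) (f : 'I_k -> R) : Prop :=
  in_simplex f /\ (forall i j, obar O f i = obar O f j) /\
  (forall i, 1 < obar O f i).

Definition Amat (n : nat) (O : 'M[R]_n.+1) : 'M[R]_n.+1 :=
  \matrix_(i, j) if i == ord_max then 1 else O i j - O ord_max j.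
End Defs.

(* The column f of A^-1 through the last basis vector solves A f = e_k: the
   last row of A says that f sums to 1, and row i says that the i-th and the
   k-th expected returns of f coincide.  With positive entries f is thus in the
   simplex with all returns equal to a common value c > 1, and then
   G(f) = c^(p_1 + ... + p_k) = c for every p in the simplex. *)
From HB Require Import structures.
From mathcomp Require Import all_boot all_order all_algebra.
From mathcomp Require Import reals exp.
Set Implicit Arguments. Unset Strict Implicit. Unset Printing Implicit Defensive.
Import Order.TTheory GRing.Theory Num.Theory.
Local Open Scope ring_scope.

Lemma mulmxV_entry (R : comUnitRingType) (n : nat) (A : 'M[R]_n) (i k : 'I_n) :
  A \in unitmx -> \sum_j A i j * invmx A j k = (i == k)%:R.
Proof. by move=> /mulmxV /matrixP /(_ i k); rewrite !mxE. Qed.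

Lemma prod_powR (R : realType) (k : nat) (c : R) (p : 'I_k -> R) :
  0 < c -> \prod_(i < k) powR c (p i) = powR c (\sum_(i < k) p i).
Proof.
move=> c_gt0; elim/big_rec2: _ => [|i x y _ ->]; first by rewrite powRr0.
by rewrite powRD // (gt_eqF c_gt0) implybT.
Qed.

Lemma in_simplex_of_ge0_sum1 (R : realType) (k : nat) (f : 'I_k -> R) :
  (forall i, 0 <= f i) -> \sum_i f i = 1 -> in_simplex f.
Proof.
move=> f_ge0 sum1; split=> // i; rewrite f_ge0 /= -sum1.
by rewrite (bigD1 i) //= lerDl sumr_ge0.
Qed.

Lemma Gfun_obar_const (R : realType) (k : nat) (O : 'M[R]_k) (p f : 'I_k -> R)
    (c : R) :
  0 < c -> (forall i, obar O f i = c) -> in_simplex p -> Gfun O p f = c.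
Proof.
move=> c_gt0 obar_c [_ sum_p1]; rewrite /Gfun.
under eq_bigr => i _ do rewrite obar_c.
by rewrite prod_powR // sum_p1 powRr1 // ltW.
Qed.

Section AmatSolution.
Variables (R : realType) (n : nat) (O : 'M[R]_n.+1) (f : 'I_n.+1 -> R).
Hypothesis Amat_f : forall i, \sum_j Amat O i j * f j = (i == ord_max)%:R.

Lemma Amat_solution_sum1 : \sum_j f j = 1.
Proof.
transitivity (\sum_j Amat O ord_max j * f j); last by rewrite Amat_f eqxx.
by apply: eq_bigr => j _; rewrite mxE eqxx mul1r.
Qed.

Lemma Amat_solution_obar_eq i : obar O f i = obar O f ord_max.
Proof.
have [-> // | i_ne] := eqVneq i ord_max.
apply/eqP; rewrite -subr_eq0; apply/eqP.
rewrite /obar -sumrB -[RHS](_ : (i == ord_max)%:R = 0); last by rewrite (negbTE i_ne).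
rewrite -Amat_f; apply: eq_bigr => j _.
by rewrite mxE (negbTE i_ne) mulrBl.
Qed.

End AmatSolution.

Theorem lemma1 (R : realType) (n : nat) (O : 'M[R]_n.+2) :
  Amat O \in unitmx ->
  (forall i j : 'I_n.+2, i != j -> O i i > O j i /\ O j i >= 0) ->
  (forall i : 'I_n.+2, (invmx (Amat O)) i ord_max > 0) ->
  (forall i : 'I_n.+2, i != ord_max ->
     \sum_(j < n.+2) O i j * (invmx (Amat O)) j ord_max > 1) ->
  dutch_book O (fun j => (invmx (Amat O)) j ord_max) /\
  (forall (p : 'I_n.+2 -> R), in_simplex p -> forall i : 'I_n.+2,
     Gfun O p (fun j => (invmx (Amat O)) j ord_max)
       = \sum_(j < n.+2) O i j * (invmx (Amat O)) j ord_max).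
Proof.
move=> A_unit _ fD_gt0 obar_gt1.
(* The ascription avoids the dependent type [(fun=> R) (j, ord_max)], on which Qed stalls. *)
set fD : 'I_n.+2 -> R := fun j => invmx (Amat O) j ord_max.
have Amat_fD i := mulmxV_entry i ord_max A_unit.
have obar_eq := Amat_solution_obar_eq Amat_fD.
have obar_last_gt1 : 1 < obar O fD ord_max.
  by rewrite -(obar_eq ord0); apply: obar_gt1; rewrite -val_eqE.
have fD_simplex : in_simplex fD.
  by apply: in_simplex_of_ge0_sum1 (Amat_solution_sum1 Amat_fD) => i; apply: ltW.
split.
  split=> //; split=> [i j | i]; first by rewrite (obar_eq i) (obar_eq j).
  by rewrite obar_eq.
move=> p p_simplex i; rewrite (Gfun_obar_const (c := obar O fD i)) //.
- by rewrite obar_eq (lt_trans ltr01).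
- by move=> l; rewrite (obar_eq l) (obar_eq i).
Qed.
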